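(* Let $p>5$ be a prime, $q=p^h$, and let $\mathcal{F}$ be the projective closure of $ax^ny^m+x^n+y^m=1$ over $\mathbb{F}_q$, where $a\in\mathbb{F}_q$, $a\ne0$, $a\neq-1$, and $m,n$ are positive integers with $p\nmid mn$, $n\ge m$, $\min\{m,n\}>2$. If $\mathcal{F}$ is nonclassical with respect to conics, then $p\mid(n+1)(n-1)$ and $p\mid(m+1)(m-1)$.
   Context: With $\varphi_0,\dots,\varphi_5$ the monomials of degree 2 in $x,y,1$, $\tau$ separating and $D^{(k)}_\tau$ Hasse derivatives, the order sequence w.r.t. conics is the lexicographically smallest $\varepsilon_0<\dots<\varepsilon_5$ with $\det(D^{(\varepsilon_i)}_\tau\varphi_j)\ne0$; the curve is classical w.r.t. conics if $\varepsilon_i=i$ for all $i$, nonclassical otherwise. *)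

From HB Require Import structures.
From mathcomp Require Import all_boot all_order all_algebra.
Set Implicit Arguments. Unset Strict Implicit. Unset Printing Implicit Defensive.
Import Order.TTheory GRing.Theory Num.Theory.
Local Open Scope ring_scope.

(* Setting: K is a field containing a copy (via the ring morphism [f]) of the
   constant field F; x, y in K are the coordinate functions of the curve.
   [D k] is the k-th Hasse derivative with respect to the separating
   variable x: an (iterative) Hasse--Schmidt higher derivation of K which
   is trivial on the constants and satisfies D^(1) x = 1, D^(k) x = 0 (k>=2). *)
Definition is_hasse_wrt (F K : fieldType) (f : {rmorphism F -> K}) (x : K)
    (D : nat -> K -> K) : Prop :=
  (forall u, D 0%N u = u) /\
  (forall k u v, D k (u + v) = D k u + D k v) /\
  (forall k u v, D k (u * v) = \sum_(i < k.+1) D i u * D (k - i)%N v) /\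
  (forall k c, (0 < k)%N -> D k (f c) = 0) /\
  D 1%N x = 1 /\
  (forall k, (1 < k)%N -> D k x = 0) /\
  (forall i j u, D i (D j u) = ('C(i + j, i))%:R * D (i + j)%N u).

Definition transcendental_over (F K : fieldType) (f : {rmorphism F -> K}) (x : K) :=
  forall P : {poly F}, P != 0 -> (map_poly f P).[x] != 0.

Definition conic_basis (K : fieldType) (x y : K) (j : 'I_6) : K :=
  nth 0 [:: 1; x; y; x ^+ 2; x * y; y ^+ 2] j.

Definition conic_wronskian (K : fieldType) (D : nat -> K -> K) (x y : K)
    (e : 'I_6 -> nat) : 'M[K]_6 :=
  \matrix_(i, j) D (e i) (conic_basis x y j).

Definition conic_admissible (K : fieldType) (D : nat -> K -> K) (x y : K)
    (e : 'I_6 -> nat) : Prop :=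
  (forall i j : 'I_6, (i < j)%N -> (e i < e j)%N) /\
  \det (conic_wronskian D x y e) != 0.

Definition lex_lt6 (e e' : 'I_6 -> nat) : Prop :=
  exists i : 'I_6, (forall j : 'I_6, (j < i)%N -> e j = e' j) /\ (e i < e' i)%N.

Definition is_conic_order_seq (K : fieldType) (D : nat -> K -> K) (x y : K)
    (e : 'I_6 -> nat) : Prop :=
  conic_admissible D x y e /\
  forall e', conic_admissible D x y e' -> (forall i, e i = e' i) \/ lex_lt6 e e'.

Definition classical_wrt_conics (K : fieldType) (D : nat -> K -> K) (x y : K) : Prop :=
  forall e, is_conic_order_seq D x y e -> forall i : 'I_6, e i = i.

Definition nonclassical_wrt_conics (K : fieldType) (D : nat -> K -> K) (x y : K) : Prop :=
  ~ classical_wrt_conics D x y.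

(* Write s = x^n, θ = x D^(1) (a derivation with θs = ns) and
   u_k = k! x^k D^(k) y, so that θu_k = k u_k + u_(k+1).  Differentiating the
   curve equation gives Q(s) θy = c s y with Q = (1 - X)(1 + aX) and
   c = -n(1 + a)/m, and then by induction Q(s)^k u_k = P_k(s) y for explicit
   polynomials P_k over F.  The conic Wronskian is -D^(2)y times Monge's
   expression in D^(2..5)y, so nonclassicality forces u_2 = 0 or
   Monge(u_2, ..., u_5) = 0; as s is transcendental this makes P_2 or
   Monge(P_2, ..., P_5) the zero polynomial, and the same holds at t = 1/s
   with the reciprocal of Q.  Evaluating at the roots 1 and -1/a of Q leaves
   the factors m^2 - 1 and (2m ∓ 1)(m ∓ 2), evaluating at 0 and at infinity
   leaves n^2 - 1 and (2n ∓ 1)(n ∓ 2); outside characteristic 2 and 5 the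
   quadratics 2L^2 ∓ 5L + 2 have no common root, so m^2 = n^2 = 1 in F. *)

From HB Require Import structures.
From mathcomp Require Import all_boot all_order all_algebra.
From mathcomp Require Import ring.
Set Implicit Arguments. Unset Strict Implicit. Unset Printing Implicit Defensive.
Import GRing.Theory.
Local Open Scope ring_scope.

(* Monge's differential expression 40 y'''^3 - 45 y''y'''y'''' + 9 y''^2 y^(5) of
   conics, with y^(k) replaced by u_k (= x^k y^(k) in characteristic 0). *)
Definition monge (R : comPzRingType) (u2 u3 u4 u5 : R) : R :=
  40%:R * u3 ^+ 3 - 45%:R * (u2 * u3 * u4) + 9%:R * (u2 ^+ 2 * u5).

Section Monge.
Variable R : comPzRingType.

Lemma monge_scale (y u2 u3 u4 u5 : R) :
  monge (y * u2) (y * u3) (y * u4) (y * u5) = y ^+ 3 * monge u2 u3 u4 u5.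
Proof. by rewrite /monge; ring. Qed.

Lemma monge_weight (q u2 u3 u4 u5 : R) :
  monge (q ^+ 2 * u2) (q ^+ 3 * u3) (q ^+ 4 * u4) (q ^+ 5 * u5) =
  q ^+ 9 * monge u2 u3 u4 u5.
Proof. by rewrite /monge; ring. Qed.

Lemma rmorph_monge (S : comPzRingType) (g : {rmorphism R -> S}) u2 u3 u4 u5 :
  g (monge u2 u3 u4 u5) = monge (g u2) (g u3) (g u4) (g u5).
Proof. by rewrite /monge rmorphD rmorphB !rmorphM !rmorph_nat; ring. Qed.

End Monge.

Lemma horner_monge (R : comNzRingType) (p2 p3 p4 p5 : {poly R}) r :
  (monge p2 p3 p4 p5).[r] = monge p2.[r] p3.[r] p4.[r] p5.[r].
Proof. exact: (rmorph_monge (horner_eval r)). Qed.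

(* If θs = Ns and Q(s) θy = c s y, then Q(s)^k u_k = (dpoly N c Q k)(s) y
   ([dpoly_eval]); the recursion is θ applied to that identity. *)
Fixpoint dpoly (R : comNzRingType) (N c : R) (Q : {poly R}) (k : nat) : {poly R} :=
  if k is k'.+1 then
    N *: ('X * Q * (dpoly N c Q k')^`()) + c *: ('X * dpoly N c Q k')
    - (Q + N *: ('X * Q^`())) * dpoly N c Q k' *+ k'
  else 1.

Definition monge_poly (R : comNzRingType) (N c : R) (Q : {poly R}) : {poly R} :=
  monge (dpoly N c Q 2) (dpoly N c Q 3) (dpoly N c Q 4) (dpoly N c Q 5).

Section DPoly.
Variables (R : comNzRingType) (N c : R) (Q : {poly R}).

Lemma dpolyS k : dpoly N c Q k.+1 =
  N *: ('X * Q * (dpoly N c Q k)^`()) + c *: ('X * dpoly N c Q k)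
  - (Q + N *: ('X * Q^`())) * dpoly N c Q k *+ k.
Proof. by []. Qed.

Lemma dpoly_root (L r : R) : Q.[r] = 0 -> N * Q^`().[r] = c * L ->
  forall k, (dpoly N c Q k).[r] = (c * r) ^+ k * \prod_(j < k) (1 - j%:R * L).
Proof.
move=> Qr QL; elim=> [|k IH]; first by rewrite big_ord0 hornerC mulr1.
transitivity ((c * r - k%:R * r * (N * Q^`().[r])) * (dpoly N c Q k).[r]).
  rewrite dpolyS !(hornerD, hornerN, hornerZ, hornerMn, hornerM, hornerX, hornerC) Qr.
  by ring.
by rewrite QL IH big_ord_recr exprS /=; ring.
Qed.

Lemma monge_poly_root (L r : R) : Q.[r] = 0 -> N * Q^`().[r] = c * L ->
  (monge_poly N c Q).[r] = - (2%:R * (c * r) ^+ 9 * ((L - 1) ^+ 3 * (L + 1)))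
                           * ((2%:R * L - 1) * (L - 2%:R)).
Proof.
move=> Qr QL; rewrite horner_monge !(dpoly_root Qr QL).
by rewrite !big_ord_recr big_ord0 /monge /=; ring.
Qed.

Lemma dpoly_at0 k : exists2 P, dpoly N c Q k.+1 = 'X * P &
  P.[0] = c * Q.[0] ^+ k * \prod_(j < k) (N - j.+1%:R).
Proof.
elim: k => [|k [P eP P0]].
  exists c%:P; last by rewrite big_ord0 hornerC expr0 !mulr1.
  by rewrite dpolyS /= -polyC1 derivC polyC1 -!mul_polyC; ring.
exists (N *: (Q * (P + 'X * P^`())) + c *: ('X * P)
        - (Q + N *: ('X * Q^`())) * P *+ k.+1).
  by rewrite dpolyS eP derivM derivX mul1r -!mul_polyC; ring.
rewrite !(hornerD, hornerN, hornerZ, hornerMn, hornerM, hornerX, hornerC) P0.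
by rewrite big_ord_recr exprS /=; ring.
Qed.

Lemma monge_poly_at0 : exists2 P, monge_poly N c Q = 'X^3 * P &
  P.[0] = 2%:R * c ^+ 3 * Q.[0] ^+ 6 * ((N - 1) ^+ 3 * (N + 1))
          * ((2%:R * N - 1) * (N - 2%:R)).
Proof.
have [P2 e2 v2] := dpoly_at0 1; have [P3 e3 v3] := dpoly_at0 2.
have [P4 e4 v4] := dpoly_at0 3; have [P5 e5 v5] := dpoly_at0 4.
exists (monge P2 P3 P4 P5); first by rewrite /monge_poly e2 e3 e4 e5 monge_scale.
by rewrite horner_monge v2 v3 v4 v5 !big_ord_recr big_ord0 /monge /=; ring.
Qed.

End DPoly.

Section DPolyIdomain.
Variables (R : idomainType) (N c : R) (Q : {poly R}).

Lemma dpoly2_root_eq0 (L r : R) : Q.[r] = 0 -> N * Q^`().[r] = c * L ->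
  c != 0 -> r != 0 -> dpoly N c Q 2 = 0 -> L = 1.
Proof.
move=> Qr QL c0 r0 P2; move: (dpoly_root Qr QL 2).
rewrite P2 horner0 !big_ord_recr big_ord0 /= mul0r subr0 !mul1r => /esym/eqP.
by rewrite !(expf_eq0, mulf_eq0) (negbTE c0) (negbTE r0) /= subr_eq0 eq_sym => /eqP.
Qed.

Lemma dpoly2_at0_eq0 : c != 0 -> Q.[0] != 0 -> dpoly N c Q 2 = 0 -> N = 1.
Proof.
move=> c0 Q0; have [P -> P0] := dpoly_at0 N c Q 1.
move/eqP; rewrite mulf_eq0 polyX_eq0 /= => /eqP P_0.
move: P0; rewrite P_0 horner0 big_ord1 expr1 => /esym/eqP.
by rewrite !mulf_eq0 (negbTE c0) (negbTE Q0) subr_eq0 => /eqP.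
Qed.

Lemma monge_poly_root_eq0 (L r : R) : Q.[r] = 0 -> N * Q^`().[r] = c * L ->
  2%:R != 0 :> R -> c != 0 -> r != 0 -> L ^+ 2 != 1 -> monge_poly N c Q = 0 ->
  (2%:R * L - 1) * (L - 2%:R) = 0.
Proof.
move=> Qr QL two0 c0 r0; rewrite sqrf_eq1 negb_or => /andP[L1 L1'] G.
move: (monge_poly_root Qr QL); rewrite G horner0 => /esym/eqP.
rewrite mulf_eq0 oppr_eq0 => /orP[|/eqP //].
rewrite !(expf_eq0, mulf_eq0) /= (negbTE two0) (negbTE c0) (negbTE r0) subr_eq0 addr_eq0.
by rewrite (negbTE L1) (negbTE L1').
Qed.

Lemma monge_poly_at0_eq0 : 2%:R != 0 :> R -> c != 0 -> Q.[0] != 0 -> N ^+ 2 != 1 ->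
  monge_poly N c Q = 0 -> (2%:R * N - 1) * (N - 2%:R) = 0.
Proof.
move=> two0 c0 Q0; rewrite sqrf_eq1 negb_or => /andP[N1 N1'].
have [P -> P0] := monge_poly_at0 N c Q.
move/eqP; rewrite mulf_eq0 expf_eq0 polyX_eq0 andbF /= => /eqP P_0.
move: P0; rewrite P_0 horner0 => /esym/eqP; rewrite mulf_eq0 => /orP[|/eqP //].
rewrite !(expf_eq0, mulf_eq0) /= (negbTE two0) (negbTE c0) (negbTE Q0) subr_eq0 addr_eq0.
by rewrite (negbTE N1) (negbTE N1').
Qed.

End DPolyIdomain.

Lemma opposite_roots_quad25 (R : idomainType) (L : R) :
  2%:R != 0 :> R -> 5%:R != 0 :> R -> (2%:R * L - 1) * (L - 2%:R) = 0 ->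
  (2%:R * - L - 1) * (- L - 2%:R) = 0 -> False.
Proof.
move=> two0 five0 e1 e2.
have L0 : L = 0.
  have : 2%:R * 5%:R * L = (2%:R * - L - 1) * (- L - 2%:R) - (2%:R * L - 1) * (L - 2%:R).
    by ring.
  by rewrite e1 e2 subrr => /eqP; rewrite !mulf_eq0 (negbTE two0) (negbTE five0) => /eqP.
by move: e1 two0; rewrite L0 mulr0 !sub0r mulrNN mul1r => ->; rewrite eqxx.
Qed.

(* [curve_poly a] evaluated at s = x^n is (1 - s)(1 + as) = y^m (1 + as)^2;
   [curve_rpoly a] is its reciprocal X^2 Q(1/X), the same factor at 1/s. *)
Definition curve_poly (R : nzRingType) (a : R) : {poly R} := (1 - 'X) * (1 + a%:P * 'X).

Definition curve_rpoly (R : nzRingType) (a : R) : {poly R} := ('X - 1) * ('X + a%:P).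

Section CurvePoly.
Variable R : comNzRingType.
Implicit Types a r : R.

Lemma horner_curve_poly a r : (curve_poly a).[r] = (1 - r) * (1 + a * r).
Proof. by rewrite /curve_poly -polyC1 !(hornerM, hornerD, hornerN, hornerC, hornerX). Qed.

Lemma horner_deriv_curve_poly a r :
  (curve_poly a)^`().[r] = a * (1 - r) - (1 + a * r).
Proof.
rewrite /curve_poly -polyC1 !(derivM, derivD, derivN, derivC, derivX, deriv_mulC).
by rewrite !(hornerM, hornerD, hornerN, hornerC, hornerX); ring.
Qed.

Lemma horner_curve_rpoly a r : (curve_rpoly a).[r] = (r - 1) * (r + a).
Proof. by rewrite /curve_rpoly -polyC1 !(hornerM, hornerD, hornerN, hornerC, hornerX). Qed.

End CurvePoly.

Lemma map_curve_poly (F K : fieldType) (f : {rmorphism F -> K}) a :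
  map_poly f (curve_poly a) = curve_poly (f a).
Proof.
by rewrite /curve_poly !(rmorphM, rmorphB, rmorphD, rmorph1) /= map_polyX map_polyC.
Qed.

Lemma map_curve_rpoly (F K : fieldType) (f : {rmorphism F -> K}) a :
  map_poly f (curve_rpoly a) = curve_rpoly (f a).
Proof.
by rewrite /curve_rpoly !(rmorphM, rmorphB, rmorphD, rmorph1) /= map_polyX map_polyC.
Qed.

Section CurveSquares.
Variables (F : fieldType) (a N c : F).
Hypotheses (two0 : 2%:R != 0 :> F) (five0 : 5%:R != 0 :> F) (a0 : a != 0) (c0 : c != 0).

Lemma curve_sqrM_eq1 M : c * M = - (N * (1 + a)) ->
  dpoly N c (curve_poly a) 2 = 0 \/ monge_poly N c (curve_poly a) = 0 -> M ^+ 2 = 1.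
Proof.
move=> cM vanish; apply/eqP/negPn/negP => M2.
have Q1 : (curve_poly a).[1] = 0 by rewrite horner_curve_poly subrr mul0r.
have QM1 : N * (curve_poly a)^`().[1] = c * M.
  by rewrite horner_deriv_curve_poly cM; ring.
have ra0 : - a^-1 != 0 by rewrite oppr_eq0 invr_eq0.
have Qa : (curve_poly a).[- a^-1] = 0.
  by rewrite horner_curve_poly mulrN mulfV // subrr mulr0.
have QMa : N * (curve_poly a)^`().[- a^-1] = c * - M.
  by rewrite horner_deriv_curve_poly [c * _]mulrN cM; field.
case: vanish => [/(dpoly2_root_eq0 Q1 QM1 c0 (oner_neq0 _)) M1 | G].
  by rewrite M1 expr1n eqxx in M2.
apply: (opposite_roots_quad25 two0 five0).
  exact: (monge_poly_root_eq0 Q1 QM1 two0 c0 (oner_neq0 _) M2 G).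
by apply: (monge_poly_root_eq0 Qa QMa two0 c0 ra0 _ G); rewrite sqrrN.
Qed.

Lemma curve_sqrN_eq1 :
  dpoly N c (curve_poly a) 2 = 0 \/
  (monge_poly N c (curve_poly a) = 0 /\ monge_poly (- N) c (curve_rpoly a) = 0) ->
  N ^+ 2 = 1.
Proof.
move=> vanish; apply/eqP/negPn/negP => N2.
have Q0 : (curve_poly a).[0] != 0.
  by rewrite horner_curve_poly subr0 mulr0 addr0 mulr1 oner_neq0.
have Qr0 : (curve_rpoly a).[0] != 0.
  by rewrite horner_curve_rpoly sub0r add0r mulN1r oppr_eq0.
case: vanish => [/(dpoly2_at0_eq0 c0 Q0) N1 | [G Gr]].
  by rewrite N1 expr1n eqxx in N2.
apply: (opposite_roots_quad25 two0 five0).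
  exact: (monge_poly_at0_eq0 two0 c0 Q0 N2 G).
by apply: (monge_poly_at0_eq0 two0 c0 Qr0 _ Gr); rewrite sqrrN.
Qed.

End CurveSquares.

Section Transcendence.
Variables (F K : fieldType) (f : {rmorphism F -> K}).

Lemma transcendental_over_neqC (s : K) (c : F) : transcendental_over f s -> s != f c.
Proof.
move=> trs; have := trs _ (negbT (polyXsubC_eq0 c)).
by rewrite rmorphB /= map_polyX map_polyC hornerD hornerN hornerX hornerC subr_eq0.
Qed.

Lemma transcendental_over_exp (x : K) n :
  transcendental_over f x -> (0 < n)%N -> transcendental_over f (x ^+ n).
Proof.
move=> trx n_gt0 P P0.
have -> : (map_poly f P).[x ^+ n] = (map_poly f (P \Po 'X^n)).[x].
  by rewrite map_comp_poly map_polyXn horner_comp hornerXn.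
apply: trx; apply: contraNneq P0 => /(congr1 (fun q : {poly F} => q`_(n * (size P).-1))).
by rewrite coef_comp_poly_Xn // dvdn_mulr // mulKn // coef0 => /eqP; rewrite lead_coef_eq0.
Qed.

Lemma transcendental_over_inv (s : K) :
  transcendental_over f s -> transcendental_over f s^-1.
Proof.
move=> trs P P0; have s0 : s != 0 by rewrite -(rmorph0 f) transcendental_over_neqC.
set d := (size P).-1; have sizeP : size P = d.+1 by rewrite prednK // size_poly_gt0.
pose R := \poly_(i < d.+1) P`_(d - i).
have R0 : R != 0.
  apply: contraNneq P0 => /(congr1 (fun q : {poly F} => q`_0)).
  by rewrite coef_poly subn0 coef0 /d -/(lead_coef P) => /eqP; rewrite lead_coef_eq0.
have rev : s ^+ d * (map_poly f P).[s^-1] = (map_poly f R).[s].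
  rewrite horner_coef size_map_poly sizeP big_distrr /=.
  rewrite (horner_coef_wide (n := d.+1)); last by rewrite size_map_poly size_poly.
  rewrite (reindex_inj rev_ord_inj) /=; apply: eq_bigr => i _.
  rewrite !coef_map coef_poly /= subSS ltn_ord mulrCA; congr (_ * _).
  by rewrite -{1}(subnK (leq_ord i)) exprD exprVn mulrAC mulfV ?mul1r ?expf_neq0.
by apply: contraNneq (trs R R0) => /(congr1 ( *%R (s ^+ d))); rewrite rev mulr0 => ->.
Qed.

End Transcendence.

Section Derivation.
Variables (F K : fieldType) (f : {rmorphism F -> K}) (th : K -> K).
Hypotheses (thD : {morph th : u v / u + v})
           (thM : forall u v, th (u * v) = th u * v + u * th v)
           (thC : forall c, th (f c) = 0).

Lemma derivation0 : th 0 = 0.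
Proof. by have := thC 0; rewrite rmorph0. Qed.

Lemma derivation1 : th 1 = 0.
Proof. by have := thC 1; rewrite rmorph1. Qed.

Lemma derivationX z k : th (z ^+ k) * z = k%:R * z ^+ k * th z.
Proof.
elim: k => [|k IH]; first by rewrite expr0 derivation1 !mul0r.
by rewrite exprS thM mulrDl -[z * _ * z]mulrA IH -natr1; ring.
Qed.

Lemma derivationX_eigen (l z : K) k : th z = l * z -> th (z ^+ k) = k%:R * l * z ^+ k.
Proof.
move=> thz; elim: k => [|k IH]; first by rewrite expr0 derivation1 !mul0r.
by rewrite exprS thM thz IH -natr1; ring.
Qed.

Lemma derivationV z : z != 0 -> th z^-1 = - th z / z ^+ 2.
Proof.
move=> z0; apply: (mulfI z0).
transitivity (th (z * z^-1) - th z * z^-1); first by rewrite thM; ring.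
by rewrite mulfV // derivation1; field.
Qed.

Lemma derivation_horner (N : F) (s : K) : th s = f N * s ->
  forall P, th ((map_poly f P).[s]) = f N * s * (map_poly f P^`()).[s].
Proof.
move=> ths; elim/poly_ind => [|P c IH].
  by rewrite deriv0 rmorph0 horner0 derivation0 mulr0.
rewrite derivMXaddC !(rmorphD, rmorphM) /= map_polyX map_polyC.
by rewrite !(hornerD, hornerMX, hornerC) thD thM thC IH ths; ring.
Qed.

Section Tower.
Variables (N c : F) (Q : {poly F}) (s y : K) (u : nat -> K).
Local Notation ev P := (map_poly f P).[s].

Lemma dpolyS_eval k : ev (dpoly N c Q k.+1) =
  f N * s * ev Q * ev (dpoly N c Q k)^`() + f c * s * ev (dpoly N c Q k)
  - k%:R * (ev Q + f N * s * ev Q^`()) * ev (dpoly N c Q k).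
Proof.
rewrite dpolyS !(rmorphB, rmorphD, rmorphM, rmorphMn) /= !map_polyZ /=.
rewrite !(rmorphD, rmorphM) /= map_polyX.
by rewrite !(hornerN, hornerMn, hornerD, hornerZ, hornerM, hornerX) -mulr_natl; ring.
Qed.

Hypotheses (ths : th s = f N * s) (thy : ev Q * th y = f c * s * y).
Hypotheses (u0 : u 0 = y) (thu : forall k, th (u k) = k%:R * u k + u k.+1).

Lemma dpoly_eval k : ev Q ^+ k * u k = y * ev (dpoly N c Q k).
Proof.
elim: k => [|k IH]; first by rewrite u0 expr0 rmorph1 -polyC1 hornerC mul1r mulr1.
set q := ev Q; set P := dpoly N c Q k.
have thq : th q = f N * s * ev Q^`() := derivation_horner ths Q.
have thP : th (ev P) = f N * s * ev P^`() := derivation_horner ths P.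
have thqu : q ^+ k * th (u k) = th y * ev P + y * (f N * s * ev P^`()) - th (q ^+ k) * u k.
  by rewrite -thP -thM -IH thM; ring.
have thqk : q * (th (q ^+ k) * u k) = k%:R * th q * (y * ev P).
  transitivity (th (q ^+ k) * q * u k); first by ring.
  by rewrite derivationX -IH; ring.
transitivity (q * (q ^+ k * th (u k)) - k%:R * q * (q ^+ k * u k)).
  by rewrite exprS thu; ring.
rewrite thqu IH.
transitivity (f N * s * q * ev P^`() * y + ev P * (q * th y)
  - q * (th (q ^+ k) * u k) - k%:R * q * (y * ev P)); first by ring.
by rewrite thy thqk thq dpolyS_eval -/P -/q; ring.
Qed.

Lemma monge_poly_eval :
  ev Q ^+ 9 * monge (u 2) (u 3) (u 4) (u 5) = y ^+ 3 * ev (monge_poly N c Q).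
Proof.
rewrite -monge_weight !dpoly_eval monge_scale.
by rewrite /monge_poly (rmorph_monge (map_poly f)) horner_monge.
Qed.

Hypotheses (trs : transcendental_over f s) (y0 : y != 0).

Lemma dpoly2_eq0 : u 2 = 0 -> dpoly N c Q 2 = 0.
Proof.
move=> u2; apply/eqP/negPn/negP => /trs/negP; apply.
by have := dpoly_eval 2; rewrite u2 mulr0 => /esym/eqP; rewrite mulf_eq0 (negbTE y0).
Qed.

Lemma monge_poly_eq0 : monge (u 2) (u 3) (u 4) (u 5) = 0 -> monge_poly N c Q = 0.
Proof.
move=> Mu; apply/eqP/negPn/negP => /trs/negP; apply.
have := monge_poly_eval; rewrite Mu mulr0 => /esym/eqP.
by rewrite mulf_eq0 expf_eq0 (negbTE y0) andbF.
Qed.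

End Tower.

Lemma curve_derivation (a N : F) (m : nat) (s y : K) :
  th s = f N * s -> f a * s * y ^+ m + s + y ^+ m = 1 ->
  m%:R * ((map_poly f (curve_poly a)).[s] * th y) = - f (N * (1 + a)) * s * y.
Proof.
move=> ths E.
have curve : y ^+ m * (1 + f a * s) = 1 - s.
  by transitivity (f a * s * y ^+ m + s + y ^+ m - s); [ring | rewrite E].
have dcurve : th (y ^+ m) * (1 + f a * s) = - (f N * s) * (1 + f a * y ^+ m).
  transitivity (th (f a * s * y ^+ m + s + y ^+ m) - f N * s * (1 + f a * y ^+ m)).
    by rewrite !thD !thM thC ths; ring.
  by rewrite E derivation1 sub0r mulNr.
have norm : (1 + f a * s) * (1 + f a * y ^+ m) = 1 + f a.
  transitivity (1 + f a * (f a * s * y ^+ m + s + y ^+ m)); first by ring.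
  by rewrite E mulr1.
rewrite map_curve_poly horner_curve_poly -curve.
transitivity ((1 + f a * s) ^+ 2 * (th (y ^+ m) * y)).
  by rewrite derivationX; ring.
transitivity ((1 + f a * s) * y * (th (y ^+ m) * (1 + f a * s))); first by ring.
rewrite dcurve; transitivity (- (f N * s * y) * ((1 + f a * s) * (1 + f a * y ^+ m))).
  by ring.
by rewrite norm rmorphM rmorphD rmorph1; ring.
Qed.

Lemma curve_dpoly_vanishing (a N c : F) (m : nat) (s y : K) (u : nat -> K) :
  m%:R != 0 :> F -> c * m%:R = - (N * (1 + a)) ->
  transcendental_over f s -> th s = f N * s -> f a * s * y ^+ m + s + y ^+ m = 1 ->
  u 0 = y -> (forall k, th (u k) = k%:R * u k + u k.+1) ->
  u 2 = 0 \/ monge (u 2) (u 3) (u 4) (u 5) = 0 ->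
  dpoly N c (curve_poly a) 2 = 0 \/
  monge_poly N c (curve_poly a) = 0 /\ monge_poly (- N) c (curve_rpoly a) = 0.
Proof.
move=> m0 cM trs ths E u0 thu vanish.
have s0 : s != 0 by rewrite -(rmorph0 f) transcendental_over_neqC.
have y0 : y != 0.
  have m_gt0 : (0 < m)%N by rewrite lt0n; apply: contraNneq m0 => ->.
  apply: contra_neq (transcendental_over_neqC 1 trs) => y0.
  by rewrite rmorph1 -E y0 -(prednK m_gt0) exprS !mul0r mulr0 add0r addr0.
have mK : m%:R != 0 :> K by rewrite -(rmorph_nat f) fmorph_eq0.
have thy : (map_poly f (curve_poly a)).[s] * th y = f c * s * y.
  apply: (mulfI mK); rewrite (curve_derivation ths E) -rmorphN -cM rmorphM rmorph_nat.
  by ring.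
have tht : th s^-1 = f (- N) * s^-1 by rewrite derivationV // ths rmorphN; field.
have thyt : (map_poly f (curve_rpoly a)).[s^-1] * th y = f c * s^-1 * y.
  transitivity (s^-1 ^+ 2 * ((map_poly f (curve_poly a)).[s] * th y)).
    by rewrite map_curve_rpoly map_curve_poly horner_curve_rpoly horner_curve_poly; field.
  by rewrite thy; field.
have trt := transcendental_over_inv trs.
case: vanish => [u2 | Mu]; [left | right].
  exact: dpoly2_eq0 ths thy u0 thu trs y0 u2.
split; first exact: monge_poly_eq0 ths thy u0 thu trs y0 Mu.
exact: monge_poly_eq0 tht thyt u0 thu trt y0 Mu.
Qed.

End Derivation.

Lemma det_mx33 (R : comNzRingType) (g : nat -> nat -> R) :
  \det (\matrix_(i < 3, j < 3) g i j) =
    g 0 0 * (g 1 1 * g 2 2 - g 2 1 * g 1 2) - g 1 0 * (g 0 1 * g 2 2 - g 2 1 * g 0 2)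
    + g 2 0 * (g 0 1 * g 1 2 - g 1 1 * g 0 2).
Proof.
rewrite (expand_det_col _ 0) !big_ord_recl big_ord0 /cofactor.
by rewrite !(expand_det_col _ 0) !big_ord_recl !big_ord0 /cofactor !det_mx11 !mxE /=; ring.
Qed.

Lemma row'0_col'_mx (R : comNzRingType) (g : nat -> nat -> R) {n m : nat}
    (j0 : 'I_m.+1) :
  row' ord0 (col' j0 (\matrix_(i < n.+1, j < m.+1) g i j)) =
  \matrix_(i < n, j < m) g i.+1 (bump j0 j).
Proof. by apply/matrixP => i j; rewrite !mxE. Qed.

Lemma det_mx6_reduce (R : comNzRingType) (g : nat -> nat -> R) :
  g 0 0 = 1 -> (forall i, g i.+1 0 = 0) -> g 1 1 = 1 -> (forall i, g i.+2 1 = 0) ->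
  g 2 3 = 1 -> (forall i, g i.+3 3 = 0) ->
  \det (\matrix_(i < 6, j < 6) g i j) =
    - (g 3 2 * (g 4 4 * g 5 5 - g 5 4 * g 4 5) - g 4 2 * (g 3 4 * g 5 5 - g 5 4 * g 3 5)
       + g 5 2 * (g 3 4 * g 4 5 - g 4 4 * g 3 5)).
Proof.
move=> g00 g0 g11 g1 g23 g3.
rewrite (expand_det_col _ 0) !big_ord_recl big_ord0 !mxE /= g00 !g0 !mul0r !addr0.
rewrite /cofactor row'0_col'_mx (expand_det_col _ 0) !big_ord_recl big_ord0 !mxE /=.
rewrite g11 !g1 !mul0r !addr0 /cofactor (row'0_col'_mx (fun a b => g a.+1 (bump 0 b))) /=.
rewrite (expand_det_col _ 1) !big_ord_recl big_ord0 !mxE /= g23 !g3 !mul0r !addr0 /cofactor.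
rewrite (row'0_col'_mx (fun a b => g a.+2 (bump 0 (bump 0 b)))) /=.
by rewrite (det_mx33 (fun a b => g a.+3 (bump 1 b).+2)) /=; ring.
Qed.

Section Hasse.
Variables (F K : fieldType) (f : {rmorphism F -> K}) (D : nat -> K -> K) (x : K).
Hypothesis hD : is_hasse_wrt f x D.

Let D0 u : D 0 u = u. Proof. by case: hD => ->. Qed.
Let DD k u v : D k (u + v) = D k u + D k v. Proof. by case: hD => _ [-> _]. Qed.
Let DM k u v : D k (u * v) = \sum_(i < k.+1) D i u * D (k - i) v.
Proof. by case: hD => _ [_ [-> _]]. Qed.
Let DC k c : (0 < k)%N -> D k (f c) = 0.
Proof. by case: hD => _ [_ [_ [h _]]]; apply: h. Qed.
Let D1x : D 1 x = 1. Proof. by case: hD => _ [_ [_ [_ [-> _]]]]. Qed.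
Let Dx k : (1 < k)%N -> D k x = 0.
Proof. by case: hD => _ [_ [_ [_ [_ [h _]]]]]; apply: h. Qed.
Let D_iter i j u : D i (D j u) = 'C(i + j, i)%:R * D (i + j) u.
Proof. by case: hD => _ [_ [_ [_ [_ [_ ->]]]]]. Qed.

Definition hasse_euler u := x * D 1 u.

Definition hasse_scaled (y : K) k := k`!%:R * x ^+ k * D k y.

Lemma hasse_eulerD : {morph hasse_euler : u v / u + v}.
Proof. by move=> u v; rewrite /hasse_euler DD mulrDr. Qed.

Lemma hasse_eulerM u v : hasse_euler (u * v) = hasse_euler u * v + u * hasse_euler v.
Proof. by rewrite /hasse_euler DM !big_ord_recl big_ord0 /= !D0; ring. Qed.

Lemma hasse_eulerC c : hasse_euler (f c) = 0.
Proof. by rewrite /hasse_euler DC ?mulr0. Qed.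

Lemma hasse_euler_x : hasse_euler x = x.
Proof. by rewrite /hasse_euler D1x mulr1. Qed.

Lemma hasse_euler_exp k : hasse_euler (x ^+ k) = k%:R * x ^+ k.
Proof.
have thx : hasse_euler x = 1 * x by rewrite hasse_euler_x mul1r.
by rewrite (derivationX_eigen hasse_eulerM hasse_eulerC k thx) mulr1.
Qed.

Lemma hasse_scaled0 y : hasse_scaled y 0 = y.
Proof. by rewrite /hasse_scaled fact0 expr0 !mul1r D0. Qed.

Lemma hasse_euler_scaled y k :
  hasse_euler (hasse_scaled y k) = k%:R * hasse_scaled y k + hasse_scaled y k.+1.
Proof.
have thk : hasse_euler k`!%:R = 0 by rewrite -(rmorph_nat f) hasse_eulerC.
have thD : hasse_euler (D k y) = k.+1%:R * (x * D k.+1 y).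
  by rewrite /hasse_euler D_iter bin1 add1n mulrCA.
by rewrite /hasse_scaled !hasse_eulerM thk hasse_euler_exp thD factS natrM exprS; ring.
Qed.

Lemma hasse_sqr_x k : D k.+3 (x ^+ 2) = 0.
Proof.
rewrite expr2 DM big1 // => j _; have [j_ge2 | j_lt2] := leqP 2 j.
  by rewrite Dx ?mul0r.
rewrite (@Dx (k.+3 - j)%N) ?mulr0 //.
by rewrite ltn_subRL addn1 ltnS (leq_trans j_lt2).
Qed.

Lemma conic_wronskian_det y :
  \det (conic_wronskian D x y (fun i => i)) =
  - (D 2 y * (2%:R * D 3 y ^+ 3 - 3%:R * D 2 y * D 3 y * D 4 y + D 2 y ^+ 2 * D 5 y)).
Proof.
have D1 k : D k.+1 1 = 0 by rewrite -(rmorph1 f) DC.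
rewrite /conic_wronskian /conic_basis.
rewrite (det_mx6_reduce (g := fun a b =>
  D a (nth 0 [:: 1; x; y; x ^+ 2; x * y; y ^+ 2] b))) /=.
- by rewrite !expr2 !DM !big_ord_recl !big_ord0 /= !D0 D1x !Dx //; ring.
- by rewrite D0.
- by move=> i; rewrite D1.
- by rewrite D1x.
- by move=> i; rewrite Dx.
- by rewrite expr2 DM !big_ord_recl big_ord0 /= !D0 D1x Dx //; ring.
- exact: hasse_sqr_x.
Qed.

Lemma conic_wronskian_eq0 y : \det (conic_wronskian D x y (fun i => i)) = 0 ->
  hasse_scaled y 2 = 0 \/
  monge (hasse_scaled y 2) (hasse_scaled y 3) (hasse_scaled y 4) (hasse_scaled y 5) = 0.
Proof.
rewrite conic_wronskian_det => /eqP; rewrite oppr_eq0 mulf_eq0 => /orP[] /eqP W0.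
  by left; rewrite /hasse_scaled W0 mulr0.
right; rewrite -(mulr0 (4320%:R * x ^+ 9)) -W0.
by rewrite /monge /hasse_scaled !factS fact0; ring.
Qed.

End Hasse.

Lemma increasing_ord_ge n (e : 'I_n -> nat) :
  {homo e : i j / (i < j)%N} -> forall i : 'I_n, (i <= e i)%N.
Proof.
move=> e_incr [i lt_in]; elim: i lt_in => [//|i IH] lt_in /=.
have := e_incr (Ordinal (ltnW lt_in)) (Ordinal lt_in) (ltnSn i).
exact: leq_ltn_trans (IH (ltnW lt_in)).
Qed.

Lemma nonclassical_conic_wronskian (K : fieldType) (D : nat -> K -> K) (x y : K) :
  nonclassical_wrt_conics D x y -> \det (conic_wronskian D x y (fun i => i)) = 0.
Proof.
move=> ncl; apply/eqP/negPn/negP => W0; apply: ncl => e [[e_incr _] e_min] i.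
have [->//|[j [_ lt_j]]] := e_min _ (conj (fun i j lt_ij => lt_ij) W0).
by have := increasing_ord_ge e_incr j; rewrite leqNgt lt_j.
Qed.

Theorem proposition4p4 (p : nat) (F : finFieldType) (K : fieldType)
    (f : {rmorphism F -> K}) (a : F) (m n : nat) (x y : K)
    (D : nat -> K -> K) :
  prime p -> (5 < p)%N -> p \in [pchar F] ->
  a != 0 -> a != -1 ->
  (0 < m)%N -> (0 < n)%N -> ~~ (p %| m * n)%N -> (m <= n)%N -> (2 < minn m n)%N ->
  transcendental_over f x ->
  f a * x ^+ n * y ^+ m + x ^+ n + y ^+ m = 1 ->
  is_hasse_wrt f x D ->
  nonclassical_wrt_conics D x y ->
  (p %| (n + 1) * (n - 1))%N /\ (p %| (m + 1) * (m - 1))%N.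
Proof.
move=> _ p_gt5 pF a0 a_neqN1 m_gt0 n_gt0 p'mn _ _ trx E hD ncl.
have natrF k : ~~ (p %| k)%N -> k%:R != 0 :> F by rewrite (dvdn_pcharf pF).
have nF : n%:R != 0 :> F by apply: natrF (contra _ p'mn); apply: dvdn_mull.
have mF : m%:R != 0 :> F by apply: natrF (contra _ p'mn); apply: dvdn_mulr.
have two0 : 2%:R != 0 :> F by apply: natrF; rewrite gtnNdvd // (ltn_trans _ p_gt5).
have five0 : 5%:R != 0 :> F by apply: natrF; rewrite gtnNdvd.
have a1 : 1 + a != 0 by rewrite addrC addr_eq0.
set c := - (n%:R * (1 + a)) / m%:R.
have cM : c * m%:R = - (n%:R * (1 + a)) by rewrite /c mulfVK.
have c0 : c != 0.
  by rewrite /c !(mulf_eq0, oppr_eq0, invr_eq0) (negbTE nF) (negbTE a1) (negbTE mF).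
have ths : hasse_euler D x (x ^+ n) = f n%:R * x ^+ n.
  by rewrite (hasse_euler_exp hD) rmorph_nat.
have vanish := curve_dpoly_vanishing (hasse_eulerD hD) (hasse_eulerM hD) (hasse_eulerC hD)
  mF cM (transcendental_over_exp trx n_gt0) ths E (hasse_scaled0 hD y)
  (hasse_euler_scaled hD y) (conic_wronskian_eq0 hD (nonclassical_conic_wronskian ncl)).
have sq1 k : (0 < k)%N -> ((k + 1) * (k - 1))%:R = k%:R ^+ 2 - 1 :> F.
  by move=> k_gt0; rewrite natrM natrD natrB //; ring.
rewrite !(dvdn_pcharf pF) !sq1 // !subr_eq0; split; apply/eqP.
  exact: curve_sqrN_eq1 two0 five0 a0 c0 vanish.
by apply: (curve_sqrM_eq1 two0 five0 a0 c0 cM); case: vanish => [|[]]; [left | right].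
Qed.
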